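(* Let $p$ be a prime, $\Delta<0$ a discriminant, and $(A,B,C)\in \mathrm{CL}(\Delta p^2)$. Let $(a,b,c)\in\mathrm{CL}(\Delta)$ be the (unique) class with $(A,B,C)\in\Psi_p(a,b,c)$. Then $$P_{p,0}(A,B,C,q)=(a,b,c,q^{p^2}).$$
   Context: A form $(a,b,c)$ denotes the $SL(2,\mathbb Z)$-equivalence class of the positive definite form $ax^2+bxy+cy^2$ ($a>0$) of discriminant $b^2-4ac<0$; it is primitive if $\gcd(a,b,c)=1$, and $\mathrm{CL}(\Delta)$ is the set of classes of primitive forms of discriminant $\Delta$. The theta series $(a,b,c,q):=\sum_{(x,y)\in\mathbb Z^2}q^{ax^2+bxy+cy^2}$ depends only on the class; $(a,b,c,q^k)$ is this series with $q\mapsto q^k$. For $m\ge1$, $0\le r<m$: $P_{m,r}\sum_{n\ge0}a(n)q^n=\sum_{n\ge0}a(mn+r)q^{mn+r}$. For a prime $p$ and primitive $(a,b,c)$ of discriminant $\Delta$, $\Psi_p(a,b,c)$ is the set of distinct classes of primitive forms occurring in the list $(a,bp,cp^2)$, $(ap^2,\,p(b+2ah),\,ah^2+bh+c)$ ($0\le h<p$) of forms of discriminant $\Delta p^2$. Known fact (Buell): $\Psi_p$ is well defined on classes, and the sets $\Psi_p(f)$, $f\in\mathrm{CL}(\Delta)$, are pairwise disjoint and partition $\mathrm{CL}(\Delta p^2)$; moreover each class of $\Psi_p(a,b,c)$ occurs exactly $w$ times in the list, where $w=3$ if $\Delta=-3$, $w=2$ if $\Delta=-4$, $w=1$ if $\Delta<-4$.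 *)

From Stdlib Require Import ZArith List Lia Znumtheory.
Open Scope Z_scope.

Definition form := (Z * Z * Z)%type.

Definition qf (f : form) (v : Z * Z) : Z :=
  let '(a, b, c) := f in let '(x, y) := v in a * x ^ 2 + b * x * y + c * y ^ 2.

Definition disc (f : form) : Z := let '(a, b, c) := f in b ^ 2 - 4 * a * c.

Definition primitive (f : form) : Prop :=
  let '(a, b, c) := f in Z.gcd (Z.gcd a b) c = 1.

Definition posdef (f : form) : Prop := let '(a, _, _) := f in 0 < a /\ disc f < 0.

Definition is_neg_disc (D : Z) : Prop := D < 0 /\ (D mod 4 = 0 \/ D mod 4 = 1).

Definition sl2_equiv (f g : form) : Prop :=
  exists al be ga de : Z, al * de - be * ga = 1 /\
    forall x y, qf g (x, y) = qf f (al * x + be * y, ga * x + de * y).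

(* F's class belongs to Psi_p(f): F is equivalent to some primitive form of the list
   (a, b p, c p^2), (a p^2, p (b + 2 a h), a h^2 + b h + c), 0 <= h < p. *)
Definition in_Psi (p : Z) (f F : form) : Prop :=
  let '(a, b, c) := f in
  (primitive (a, b * p, c * p ^ 2) /\ sl2_equiv F (a, b * p, c * p ^ 2)) \/
  (exists h, 0 <= h < p /\
     primitive (a * p ^ 2, p * (b + 2 * a * h), a * h ^ 2 + b * h + c) /\
     sl2_equiv F (a * p ^ 2, p * (b + 2 * a * h), a * h ^ 2 + b * h + c)).

(* Formal power series in q with integer coefficients, as coefficient sequences. *)
Definition series := nat -> Z.

(* For a
   positive definite form every solution satisfies |x|,|y| <= 4(|a|+|c|) n
   (lemma theta_box_complete below), so counting in that box is exact. *)
Definition zrange (N : nat) : list Z :=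
  map (fun k => Z.of_nat k - Z.of_nat N) (seq 0 (2 * N + 1)).

Definition box_bound (f : form) (n : nat) : nat :=
  let '(a, _, c) := f in (4 * (Z.to_nat (Z.abs a) + Z.to_nat (Z.abs c)) * n)%nat.

Definition theta (f : form) : series := fun n =>
  Z.of_nat (length (filter (fun v => Z.eqb (qf f v) (Z.of_nat n))
     (list_prod (zrange (box_bound f n)) (zrange (box_bound f n))))).

Definition Pmr (m r : nat) (s : series) : series :=
  fun n => if Nat.eqb (n mod m) r then s n else 0.

Definition qpow (k : nat) (s : series) : series :=
  fun n => if Nat.eqb (n mod k) 0 then s (n / k)%nat else 0.

Lemma theta_box_complete (f : form) (n : nat) (x y : Z) :
  posdef f -> qf f (x, y) = Z.of_nat n ->
  Z.abs x <= Z.of_nat (box_bound f n) /\ Z.abs y <= Z.of_nat (box_bound f n).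
Proof.
  destruct f as [[a b] c]; unfold posdef, qf, box_bound, disc. intros [Ha Hd] Hq.
  assert (0 <= b ^ 2) by nia.
  assert (Hc : 0 < c).
  { destruct (Z_lt_le_dec 0 c) as [|Hc]; [assumption|].
    assert (a * c <= 0) by (apply Z.mul_nonneg_nonpos; lia).
    assert (4 * a * c = 4 * (a * c)) by ring. lia. }
  rewrite !Nat2Z.inj_mul, Nat2Z.inj_add.
  rewrite !Z2Nat.id by lia.
  assert (Hy : y ^ 2 <= 4 * a * Z.of_nat n).
  { assert (4 * a * (a * x ^ 2 + b * x * y + c * y ^ 2) =
            (2*a*x + b*y)^2 + (4*a*c - b^2) * y^2) by ring. nia. }
  assert (Hx : x ^ 2 <= 4 * c * Z.of_nat n).
  { assert (4 * c * (a * x ^ 2 + b * x * y + c * y ^ 2) =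
            (2*c*y + b*x)^2 + (4*a*c - b^2) * x^2) by ring. nia. }
  assert (Z.abs x <= x ^ 2) by nia. assert (Z.abs y <= y ^ 2) by nia.
  rewrite (Z.abs_eq a), (Z.abs_eq c) by lia.
  assert (0 <= Z.of_nat n) by lia.
  split; nia.
Qed.

(* F is SL(2,Z)-equivalent to a form G of the list, and theta series are class invariants.
   Each such G is f composed with an integral map T of determinant p, G(v) = f(T v), and
   T Z^2 is an index-p sublattice containing p Z^2.  As G is primitive while p divides two
   of its coefficients, p | G(v) forces T v into p Z^2.  So a multiple n of p is represented
   by G only if p^2 | n, and then v |-> T v / p is a bijection onto the representations of
   n / p^2 by f. *)
From Stdlib Require Import ZArith Znumtheory.
From Stdlib Require Import Arith List Lia.
Open Scope Z_scope.

Definition reps (f : form) (n : nat) : list (Z * Z) :=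
  filter (fun v => Z.eqb (qf f v) (Z.of_nat n))
     (list_prod (zrange (box_bound f n)) (zrange (box_bound f n))).

Lemma theta_reps f n : theta f n = Z.of_nat (length (reps f n)).
Proof. reflexivity. Qed.

Lemma NoDup_list_prod {A B} (l : list A) (l' : list B) :
  NoDup l -> NoDup l' -> NoDup (list_prod l l').
Proof.
  induction l as [|x l IH]; simpl; intros Hl Hl'; [constructor|].
  inversion Hl as [|? ? Hx Hl0]; subst. apply NoDup_app; auto.
  - apply NoDup_map_NoDup_ForallPairs; auto. now intros ? ? _ _ [= ->].
  - intros [u v] Hu Hv. apply in_map_iff in Hu as [y [[= <- _] _]].
    now apply in_prod_iff in Hv as [? _].
Qed.

Lemma NoDup_zrange N : NoDup (zrange N).
Proof.
  apply NoDup_map_NoDup_ForallPairs; [intros ? ? _ _ ?; lia | apply seq_NoDup].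
Qed.

Lemma In_zrange N z : Z.abs z <= Z.of_nat N -> In z (zrange N).
Proof.
  intros Hz. apply in_map_iff. exists (Z.to_nat (z + Z.of_nat N)).
  split; [lia | apply in_seq; lia].
Qed.

Lemma NoDup_reps f n : NoDup (reps f n).
Proof. apply NoDup_filter, NoDup_list_prod; apply NoDup_zrange. Qed.

Lemma In_reps f n v : posdef f -> In v (reps f n) <-> qf f v = Z.of_nat n.
Proof.
  intros Hf. unfold reps. rewrite filter_In, Z.eqb_eq.
  split; [tauto|]. intros Hv; split; [|exact Hv].
  destruct v as [x y]. destruct (theta_box_complete f n x y Hf Hv).
  apply in_prod_iff; split; now apply In_zrange.
Qed.

Lemma length_le_of_injection {A B} (g : A -> B) (l1 : list A) (l2 : list B) :
  NoDup l1 -> (forall x y, In x l1 -> In y l1 -> g x = g y -> x = y) ->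
  (forall x, In x l1 -> In (g x) l2) -> (length l1 <= length l2)%nat.
Proof.
  intros Hl1 Hg Hin. rewrite <- (length_map g l1). apply NoDup_incl_length.
  - now apply NoDup_map_NoDup_ForallPairs.
  - intros y Hy. apply in_map_iff in Hy as [x [<- Hx]]. auto.
Qed.

Lemma theta_eq_of_bij (F f : form) (n m : nat) (phi psi : Z * Z -> Z * Z) :
  posdef F -> posdef f ->
  (forall v, qf F v = Z.of_nat n -> qf f (phi v) = Z.of_nat m) ->
  (forall w, qf f w = Z.of_nat m -> qf F (psi w) = Z.of_nat n) ->
  (forall v, qf F v = Z.of_nat n -> psi (phi v) = v) ->
  (forall w, qf f w = Z.of_nat m -> phi (psi w) = w) ->
  theta F n = theta f m.
Proof.
  intros HF Hf Hphi Hpsi Hpsiphi Hphipsi. rewrite !theta_reps. f_equal.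
  apply Nat.le_antisymm.
  - apply (length_le_of_injection phi); [apply NoDup_reps | |].
    + intros v v' Hv Hv' E. apply In_reps in Hv, Hv'; auto.
      now rewrite <- (Hpsiphi v), <- (Hpsiphi v'), E.
    + intros v Hv. apply In_reps in Hv; auto. now apply In_reps, Hphi.
  - apply (length_le_of_injection psi); [apply NoDup_reps | |].
    + intros w w' Hw Hw' E. apply In_reps in Hw, Hw'; auto.
      now rewrite <- (Hphipsi w), <- (Hphipsi w'), E.
    + intros w Hw. apply In_reps in Hw; auto. now apply In_reps, Hpsi.
Qed.

Lemma theta_eq_0 (F : form) (n : nat) :
  posdef F -> (forall v, qf F v <> Z.of_nat n) -> theta F n = 0.
Proof.
  intros HF Hn. rewrite theta_reps. destruct (reps F n) as [|v l] eqn:E; [reflexivity|].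
  exfalso. apply (Hn v), (In_reps F n v HF). rewrite E. now left.
Qed.

Definition lmap (al be ga de : Z) (v : Z * Z) : Z * Z :=
  (al * fst v + be * snd v, ga * fst v + de * snd v).

Definition zscale (k : Z) (v : Z * Z) : Z * Z := (k * fst v, k * snd v).

Definition zunscale (k : Z) (v : Z * Z) : Z * Z := (fst v / k, snd v / k).

Lemma qf_zscale f k w : qf f (zscale k w) = k ^ 2 * qf f w.
Proof. destruct f as [[a b] c], w as [x y]; unfold qf, zscale; cbn [fst snd]; ring. Qed.

Lemma zunscale_zscale k w : k <> 0 -> zunscale k (zscale k w) = w.
Proof.
  intros Hk. destruct w as [x y]; unfold zunscale, zscale; cbn [fst snd].
  now rewrite !(Z.mul_comm k), !Z.div_mul.
Qed.

Lemma zscale_inj k v v' : k <> 0 -> zscale k v = zscale k v' -> v = v'.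
Proof.
  intros Hk E. now rewrite <- (zunscale_zscale k v), <- (zunscale_zscale k v'), E.
Qed.

Lemma zscale_1 v : zscale 1 v = v.
Proof. destruct v; unfold zscale; cbn [fst snd]; f_equal; ring. Qed.

Lemma lmap_adj_l al be ga de v :
  lmap de (- be) (- ga) al (lmap al be ga de v) = zscale (al * de - be * ga) v.
Proof. destruct v; unfold lmap, zscale; cbn [fst snd]; f_equal; ring. Qed.

Lemma lmap_adj_r al be ga de v :
  lmap al be ga de (lmap de (- be) (- ga) al v) = zscale (al * de - be * ga) v.
Proof. destruct v; unfold lmap, zscale; cbn [fst snd]; f_equal; ring. Qed.

Lemma lmap_inj al be ga de v v' :
  al * de - be * ga <> 0 -> lmap al be ga de v = lmap al be ga de v' -> v = v'.
Proof.
  intros Hdet E. apply (zscale_inj _ _ _ Hdet).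
  now rewrite <- !lmap_adj_l, E.
Qed.

Lemma theta_sl2_equiv (F G : form) (n : nat) :
  posdef F -> posdef G -> sl2_equiv F G -> theta F n = theta G n.
Proof.
  intros HF HG [al [be [ga [de [Hdet HFG]]]]].
  assert (HGF : forall v, qf G v = qf F (lmap al be ga de v)) by (intros [x y]; apply HFG).
  apply (theta_eq_of_bij F G n n (lmap de (- be) (- ga) al) (lmap al be ga de)); auto.
  - intros v Hv. now rewrite HGF, lmap_adj_r, Hdet, zscale_1.
  - intros w Hw. now rewrite <- HGF.
  - intros v _. now rewrite lmap_adj_r, Hdet, zscale_1.
  - intros w _. now rewrite lmap_adj_l, Hdet, zscale_1.
Qed.

Lemma nat_mod_eq_0_iff (n d : nat) :
  (0 < d)%nat -> (n mod d = 0)%nat <-> (Z.of_nat d | Z.of_nat n).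
Proof. intros Hd. rewrite <- Z.mod_divide, <- Nat2Z.inj_mod by lia. lia. Qed.

Section Sublattice.

Variables (p : nat) (G f : form) (al be ga de : Z).
Local Notation P := (Z.of_nat p).
Local Notation T := (lmap al be ga de).

Hypothesis p_pos : (0 < p)%nat.
Hypotheses (G_posdef : posdef G) (f_posdef : posdef f).
Hypothesis det_T : al * de - be * ga = P.
Hypothesis qf_G : forall v, qf G v = qf f (T v).
Hypothesis T_divide : forall v, (P | qf G v) -> exists w, T v = zscale P w.

Lemma theta_sublattice_scaled (m : nat) : theta G (p ^ 2 * m)%nat = theta f m.
Proof.
  assert (Hn : Z.of_nat (p ^ 2 * m)%nat = P ^ 2 * Z.of_nat m)
    by now rewrite Nat2Z.inj_mul, Nat2Z.inj_pow.
  assert (HP : P <> 0) by lia.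
  assert (Hdiv : forall v, qf G v = P ^ 2 * Z.of_nat m -> exists w, T v = zscale P w).
  { intros v Hv. apply T_divide. rewrite Hv. exists (P * Z.of_nat m). ring. }
  apply (theta_eq_of_bij G f _ m (fun v => zunscale P (T v)) (lmap de (- be) (- ga) al));
    auto; rewrite ?Hn.
  - intros v Hv. destruct (Hdiv v Hv) as [w Hw].
    rewrite Hw, zunscale_zscale by exact HP.
    rewrite qf_G, Hw, qf_zscale in Hv. nia.
  - intros w Hw. now rewrite qf_G, lmap_adj_r, det_T, qf_zscale, Hw.
  - intros v Hv. destruct (Hdiv v Hv) as [w Hw].
    rewrite Hw, zunscale_zscale by exact HP.
    apply (lmap_inj al be ga de); [lia|].
    now rewrite lmap_adj_r, det_T, Hw.
  - intros w _. now rewrite lmap_adj_r, det_T, zunscale_zscale.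
Qed.

Lemma theta_sublattice_nondiv n :
  (n mod p = 0)%nat -> (n mod p ^ 2 <> 0)%nat -> theta G n = 0.
Proof.
  intros Hp Hp2. apply theta_eq_0; [exact G_posdef|]. intros v Hv.
  apply nat_mod_eq_0_iff in Hp; [|exact p_pos].
  destruct (T_divide v) as [w Hw]; [now rewrite Hv|].
  apply Hp2, nat_mod_eq_0_iff; [apply Nat.neq_0_lt_0, Nat.pow_nonzero; lia|].
  exists (qf f w). rewrite <- Hv, qf_G, Hw, qf_zscale, Nat2Z.inj_pow.
  change (Z.of_nat 2) with 2. ring.
Qed.

Lemma Pmr_theta_sublattice n : Pmr p 0 (theta G) n = qpow (p ^ 2) (theta f) n.
Proof.
  unfold Pmr, qpow.
  destruct (Nat.eqb_spec (n mod p ^ 2) 0) as [Hp2|Hp2];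
    destruct (Nat.eqb_spec (n mod p) 0) as [Hp|Hp]; try reflexivity.
  - apply Nat.Div0.div_exact in Hp2. rewrite Hp2 at 1. apply theta_sublattice_scaled.
  - exfalso. apply Hp, Nat.Lcm0.mod_divide.
    apply Nat.Lcm0.mod_divide in Hp2. destruct Hp2 as [k ->].
    exists (k * p)%nat. rewrite Nat.pow_2_r. ring.
  - now apply theta_sublattice_nondiv.
Qed.

End Sublattice.

Lemma primitive_no_common_divisor d a b c :
  1 < d -> primitive (a, b, c) -> (d | a) -> (d | b) -> (d | c) -> False.
Proof.
  intros Hd Hprim Ha Hb Hc. unfold primitive in Hprim.
  assert (H1 : (d | 1)) by (rewrite <- Hprim; auto using Z.gcd_greatest).
  apply Z.divide_pos_le in H1; lia.
Qed.

Lemma prime_divide_mul_sq q k x : prime q -> ~ (q | k) -> (q | k * x ^ 2) -> (q | x).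
Proof.
  intros Hq Hk Hkx. rewrite Z.pow_2_r in Hkx.
  destruct (prime_mult q Hq _ _ Hkx) as [|Hxx]; [contradiction|].
  now destruct (prime_mult q Hq _ _ Hxx).
Qed.

Section Psi.

Variables (p : nat) (a b c : Z).
Local Notation P := (Z.of_nat p).

Hypothesis P_prime : prime P.
Hypothesis f_posdef : posdef (a, b, c).

Lemma posdef_of_disc_scaled a' b' c' :
  0 < a' -> disc (a', b', c') = P ^ 2 * disc (a, b, c) -> posdef (a', b', c').
Proof.
  intros Ha' Hdisc. pose proof (prime_ge_2 P P_prime). destruct f_posdef as [_ Hf].
  split; [exact Ha'|]. rewrite Hdisc. nia.
Qed.

Lemma Pmr_theta_Psi_first (F : form) :
  posdef F -> primitive (a, b * P, c * P ^ 2) -> sl2_equiv F (a, b * P, c * P ^ 2) ->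
  forall n, Pmr p 0 (theta F) n = qpow (p ^ 2) (theta (a, b, c)) n.
Proof.
  intros HF Hprim HFG n. pose proof (prime_ge_2 P P_prime) as HP.
  set (G := (a, b * P, c * P ^ 2)) in *.
  assert (HG : posdef G).
  { apply posdef_of_disc_scaled; [apply f_posdef | unfold disc; ring]. }
  transitivity (Pmr p 0 (theta G) n).
  { unfold Pmr. now rewrite (theta_sl2_equiv F G n). }
  apply (Pmr_theta_sublattice p _ _ 1 0 0 P); auto; [lia | ring | |].
  - intros [x y]. unfold G, qf, lmap. cbn [fst snd]. ring.
  - intros [x y] Hxy.
    assert (Hx : (P | x)).
    { apply (prime_divide_mul_sq P a x P_prime).
      - intros HPa. apply (primitive_no_common_divisor P _ _ _ ltac:(lia) Hprim HPa).
        + now exists b.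
        + exists (c * P). ring.
      - apply (Z.divide_add_cancel_r _ (P * (b * x * y + c * P * y ^ 2))).
        + exists (b * x * y + c * P * y ^ 2). ring.
        + replace (_ + _) with (qf G (x, y)) by (unfold G, qf; ring).
          exact Hxy. }
    destruct Hx as [k ->]. exists (k, y). unfold lmap, zscale. cbn [fst snd]. f_equal; ring.
Qed.

Lemma Pmr_theta_Psi_second (F : form) (h : Z) :
  posdef F -> primitive (a * P ^ 2, P * (b + 2 * a * h), a * h ^ 2 + b * h + c) ->
  sl2_equiv F (a * P ^ 2, P * (b + 2 * a * h), a * h ^ 2 + b * h + c) ->
  forall n, Pmr p 0 (theta F) n = qpow (p ^ 2) (theta (a, b, c)) n.
Proof.
  intros HF Hprim HFG n. pose proof (prime_ge_2 P P_prime) as HP.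
  set (G := (a * P ^ 2, P * (b + 2 * a * h), a * h ^ 2 + b * h + c)) in *.
  assert (HG : posdef G).
  { apply posdef_of_disc_scaled; [destruct f_posdef; nia | unfold disc; ring]. }
  transitivity (Pmr p 0 (theta G) n).
  { unfold Pmr. now rewrite (theta_sl2_equiv F G n). }
  apply (Pmr_theta_sublattice p _ _ P h 0 1); auto; [lia | ring | |].
  - intros [x y]. unfold G, qf, lmap. cbn [fst snd]. ring.
  - intros [x y] Hxy.
    assert (Hy : (P | y)).
    { apply (prime_divide_mul_sq P (a * h ^ 2 + b * h + c) y P_prime).
      - intros HPk. apply (primitive_no_common_divisor P _ _ _ ltac:(lia) Hprim); [| |exact HPk].
        + exists (a * P). ring.
        + exists (b + 2 * a * h). ring.
      - apply (Z.divide_add_cancel_r _ (P * (a * P * x ^ 2 + (b + 2 * a * h) * x * y))).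
        + exists (a * P * x ^ 2 + (b + 2 * a * h) * x * y). ring.
        + replace (_ + _) with (qf G (x, y)) by (unfold G, qf; ring).
          exact Hxy. }
    destruct Hy as [k ->]. exists (x + h * k, k). unfold lmap, zscale. cbn [fst snd].
    f_equal; ring.
Qed.

End Psi.

Theorem lemma4p3 (p : nat) (D A B C a b c : Z) :
  prime (Z.of_nat p) ->
  is_neg_disc D ->
  0 < A -> primitive (A, B, C) -> disc (A, B, C) = D * Z.of_nat p ^ 2 ->
  0 < a -> primitive (a, b, c) -> disc (a, b, c) = D ->
  in_Psi (Z.of_nat p) (a, b, c) (A, B, C) ->
  forall n : nat, Pmr p 0 (theta (A, B, C)) n = qpow (p ^ 2) (theta (a, b, c)) n.
Proof.
  intros Hp [HD _] HA _ HdF Ha _ Hdf HPsi.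
  assert (Hf : posdef (a, b, c)) by (split; lia).
  assert (HF : posdef (A, B, C)).
  { pose proof (prime_ge_2 _ Hp). split; [exact HA | rewrite HdF; nia]. }
  destruct HPsi as [[Hprim HFG] | [h [_ [Hprim HFG]]]].
  - exact (Pmr_theta_Psi_first p a b c Hp Hf (A, B, C) HF Hprim HFG).
  - exact (Pmr_theta_Psi_second p a b c Hp Hf (A, B, C) h HF Hprim HFG).
Qed.
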